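(* Let $M_L\le GL(7,\mathbb{C})$ be the group generated by the permutation matrices $(12),(23),(34),(56),(67)$ and the matrix $A$ defined in the context. Then $M_L$ is isomorphic to the Coxeter group $W(D_6)$, which has $23040$ elements.
   Context: A permutation $\sigma\in S_7$ is identified with the $7\times7$ permutation matrix sending $e_i$ to $e_{\sigma(i)}$. The matrix $A$ is \[ A=\begin{pmatrix} 1&0&0&0&0&0&0\\ 0&1&0&0&0&0&0\\ 0&0&-1&0&0&0&1\\ 0&0&0&-1&0&0&1\\ 0&0&-1&-1&1&0&1\\ 0&0&-1&-1&0&1&1\\ 0&0&0&0&0&0&1 \end{pmatrix}. \] $W(D_6)$ denotes the Coxeter group of type $D_6$. *)

From HB Require Import structures.
From mathcomp Require Import all_boot all_order all_algebra all_fingroup all_field.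
Set Implicit Arguments. Unset Strict Implicit. Unset Printing Implicit Defensive.
Import GRing.Theory Num.Theory.
Local Open Scope ring_scope.

(* Complex numbers: algC (algebraic closure of Q inside C); all matrices here
   have integer entries, so GL(7, algC) is a faithful stand-in for GL(7, C)
   (the generated subgroup is literally the same set of integer matrices). *)

(* 1-based index k in {1,...,7} as an element of 'I_7 = {0,...,6}. *)
Definition ix (k : nat) : 'I_7 := inord k.-1.

(* Permutation matrix of s : 'S_7 sending e_j to e_(s j) (column convention). *)
Definition pmx (s : 'S_7) : 'M[algC]_7 := \matrix_(i, j) (i == s j)%:R.

Definition tp (a b : nat) : 'S_7 := tperm (ix a) (ix b).

Definition A_rows : seq (seq int) :=
  [:: [:: 1; 0; 0; 0; 0; 0; 0];
      [:: 0; 1; 0; 0; 0; 0; 0];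
      [:: 0; 0; -1; 0; 0; 0; 1];
      [:: 0; 0; 0; -1; 0; 0; 1];
      [:: 0; 0; -1; -1; 1; 0; 1];
      [:: 0; 0; -1; -1; 0; 1; 1];
      [:: 0; 0; 0; 0; 0; 0; 1]]%Z.

Definition A : 'M[algC]_7 :=
  \matrix_(i, j) ((nth 0%Z (nth [::] A_rows i) j)%:~R).

Definition ML_gens (M : 'M[algC]_7) : Prop :=
  M = pmx (tp 1 2) \/ M = pmx (tp 2 3) \/ M = pmx (tp 3 4) \/
  M = pmx (tp 5 6) \/ M = pmx (tp 6 7) \/ M = A.

Inductive gen_mxgroup (S : 'M[algC]_7 -> Prop) : 'M[algC]_7 -> Prop :=
  | gen_one : gen_mxgroup S 1%:M
  | gen_base M : S M -> gen_mxgroup S M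
  | gen_mul M N : gen_mxgroup S M -> gen_mxgroup S N -> gen_mxgroup S (M *m N)
  | gen_inv M : gen_mxgroup S M -> M \in unitmx -> gen_mxgroup S (invmx M).

Definition ML : 'M[algC]_7 -> Prop := gen_mxgroup ML_gens.

(* The Coxeter group W(D_6), given by its Coxeter presentation with Dynkin
   diagram  s1 - s2 - s3 - s4 - s5,  s4 - s6. *)
Definition is_W_D6 (gT : finGroupType) (W : {group gT}) : Prop :=
  (W \isog Grp (s1 : s2 : s3 : s4 : s5 : s6 :
     s1 ^+ 2, s2 ^+ 2, s3 ^+ 2, s4 ^+ 2, s5 ^+ 2, s6 ^+ 2,
     (s1 * s2) ^+ 3, (s2 * s3) ^+ 3, (s3 * s4) ^+ 3, (s4 * s5) ^+ 3,
     (s4 * s6) ^+ 3,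
     (s1 * s3) ^+ 2, (s1 * s4) ^+ 2, (s1 * s5) ^+ 2, (s1 * s6) ^+ 2,
     (s2 * s4) ^+ 2, (s2 * s5) ^+ 2, (s2 * s6) ^+ 2,
     (s3 * s5) ^+ 2, (s3 * s6) ^+ 2, (s5 * s6) ^+ 2))%g.

From HB Require Import structures.
From mathcomp Require Import all_boot all_order all_algebra all_fingroup all_field.
Set Implicit Arguments. Unset Strict Implicit. Unset Printing Implicit Defensive.
Import Order.TTheory GRing.Theory.

(* The six generators of M_L permute the orbit O of the standard basis row
   vectors e_1, ..., e_7 under right multiplication; O has 92 elements, and since
   it contains the basis, M_L acts faithfully on it. So M_L is isomorphic to the
   group W of permutations of O induced by its elements, and a matrix of M_L is
   recovered as the matrix whose rows are the images of the basis vectors.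
   Explicit words in the generators give six involutions s_1, ..., s_6 of W that
   generate W and satisfy the Coxeter relations of D_6. A coset enumeration along
   the parabolic chain A_1 < A_2 < A_3 < D_4 < D_5 < D_6, checked by rewriting with
   Coxeter moves, shows that six elements satisfying these relations generate a
   group of order at most 2 * 3 * 4 * 8 * 10 * 12 = 23040, while the 23040
   coset-representative words already move the basis vectors differently in W.
   Hence |W| = 23040, and applying the bound to the subgroup of W x H generated by
   the pairs (s_i, t_i) shows that W maps onto every group H generated by elements
   t_i satisfying the relations, i.e. W is presented by the Coxeter presentation. *)

Lemma invg_involution (gT : finGroupType) (z : gT) : (z ^+ 2 = 1 -> z^-1 = z)%g.
Proof. by move=> z2; apply/eqP; rewrite eq_invg_mul -expg2 z2. Qed.

Section Involutions.
Local Open Scope group_scope.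
Variables (gT : finGroupType) (x y : gT).
Hypotheses (x2 : x ^+ 2 = 1) (y2 : y ^+ 2 = 1).

Lemma involutions_commute : (x * y) ^+ 2 = 1 -> x * y = y * x.
Proof. by move/invg_involution; rewrite invMg !invg_involution // => ->. Qed.

Lemma involutions_braid : (x * y) ^+ 3 = 1 -> x * y * x = y * x * y.
Proof.
move=> xy3; have: (x * y)^-1 = (x * y) ^+ 2.
  by apply/eqP; rewrite eq_invg_mul -expgS xy3.
rewrite invMg !invg_involution // expgS expg1 => yx.
by rewrite yx !mulgA -(mulgA _ y y) -expg2 y2 mulg1.
Qed.

Lemma involutions_order_sym k : (x * y) ^+ k = 1 -> (y * x) ^+ k = 1.
Proof.
move=> xyk.
by rewrite -[y]invg_involution // -[x]invg_involution // -invMg expVgn xyk invg1.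
Qed.

End Involutions.

Section GeneratedFamily.
Local Open Scope group_scope.
Variables (gT : finGroupType) (s : nat -> gT).

Lemma gen_imset_ord_recr n :
  <<[set s (val i) | i : 'I_n.+1]>> = <<[set s (val i) | i : 'I_n]>> <*> <[s n]>.
Proof.
rewrite joing_idl [<[s n]>]/cycle joing_idr; congr <<_>>; apply/setP=> x; rewrite inE.
apply/imsetP/orP=> [[i _ ->]|[/imsetP[i _ ->]|/set1P->]].
- case: (ltngtP i n) (ltn_ord i) => [lt_in _|lt_ni|i_n _].
  + by left; apply/imsetP; exists (Ordinal lt_in).
  + by rewrite ltnS leqNgt lt_ni.
  + by right; apply/set1P; congr s.
- by exists (widen_ord (leqnSn n) i).
- by exists ord_max.
Qed.

End GeneratedFamily.

Section CoxeterWords.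
Variables (n : nat) (m : nat -> nat -> nat).
Hypothesis m_diag : forall i, m i i = 1.

Definition coxeter_family (gT : finGroupType) (s : nat -> gT) :=
  forall i j, i < n -> j < n -> ((s i * s j) ^+ m i j = 1)%g.

Definition coxeter_move (l r : seq nat) : bool :=
  match l, r with
  | [:: a; b], [::] | [::], [:: a; b] => (a == b) && (a < n)
  | [:: a; b], [:: c; d] => [&& a == d, b == c, a < n, b < n & m a b == 2]
  | [:: a; b; c], [:: d; e; f] =>
      [&& a == c, a == e, b == d, b == f, a < n, b < n & m a b == 3]
  | _, _ => false
  end.

Definition rewrite_step := (nat * seq nat * seq nat)%type.

Definition apply_move (w : seq nat) (st : rewrite_step) : option (seq nat) :=
  let: (p, l, r) := st in
  if coxeter_move l r && (take (size l) (drop p w) == l)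
  then Some (take p w ++ r ++ drop (p + size l) w) else None.

Definition apply_moves (w : seq nat) (sts : seq rewrite_step) : option (seq nat) :=
  foldl (fun ow st => obind (apply_move ^~ st) ow) (Some w) sts.

(* A level (J', R, C) of a coset certificate over the generators J of the previous
   level: R lists right coset representatives of <J> in <J'>, and C provides, for
   each r in R and j in J', moves rewriting r j into u r' with u a word over J and
   r' in R. *)
Definition coset_level :=
  (seq nat * seq (seq nat) * seq (seq nat * nat * seq rewrite_step))%type.

Definition rewrites_into (J : seq nat) (R : seq (seq nat)) w sts :=
  if apply_moves w sts is Some v then
    has (fun k => all [in J] (take k v) && (drop k v \in R)) (iota 0 (size v).+1)
  else false.

Definition level_ok (J : seq nat) (lv : coset_level) : bool :=
  let: (J', R, C) := lv in
  all (gtn n) J' &&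
  all (fun r => all (fun j => has (fun c => let: (r0, j0, sts) := c in
     [&& r0 == r, j0 == j & rewrites_into J R (rcons r j) sts]) C) J') R.

Fixpoint chain_ok (J : seq nat) (L : seq coset_level) : bool :=
  if L is lv :: L' then level_ok J lv && chain_ok lv.1.1 L' else true.

Definition extend_words (W : seq (seq nat)) (lv : coset_level) :=
  [seq a ++ r | a <- W, r <- lv.1.2].

Definition chain_words (L : seq coset_level) : seq (seq nat) :=
  foldl extend_words [:: [::]] L.

Definition coset_certificate (L : seq coset_level) : bool :=
  [&& chain_ok [::] L, last [::] [seq lv.1.1 | lv <- L] == iota 0 n
    & [::] \in chain_words L].

Section Evaluation.
Local Open Scope group_scope.
Variables (gT : finGroupType) (s : nat -> gT).
Hypothesis coxeter_rel : coxeter_family s.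

Definition eval_word (w : seq nat) : gT := \prod_(i <- w) s i.

Lemma eval_word_cat u v : eval_word (u ++ v) = eval_word u * eval_word v.
Proof. exact: big_cat. Qed.

Lemma eval_word_nseq w k : eval_word (flatten (nseq k w)) = eval_word w ^+ k.
Proof.
elim: k => [|k IHk]; first by rewrite /eval_word big_nil.
by rewrite -[flatten _]/(w ++ _) eval_word_cat IHk expgS.
Qed.

Lemma eval_word_mem_gen w :
  all (gtn n) w -> eval_word w \in <<[set s (val i) | i : 'I_n]>>.
Proof.
rewrite /eval_word; elim: w => [|j w IHw] /=; first by rewrite big_nil group1.
case/andP=> lt_jn w_n; rewrite big_cons groupM ?IHw // mem_gen //.
by apply/imsetP; exists (Ordinal lt_jn).
Qed.

Lemma coxeter_gen_sq i : i < n -> s i ^+ 2 = 1.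
Proof. by move=> lt_in; rewrite -(coxeter_rel lt_in lt_in) m_diag expg1. Qed.

Lemma coxeter_move_sound l r : coxeter_move l r -> eval_word l = eval_word r.
Proof.
rewrite /eval_word.
case: l => [|a [|b [|c [|? ?]]]]; case: r => [|d [|e [|f [|? ?]]]] //=;
  rewrite ?big_cons ?big_nil ?mulg1.
- by case/andP=> /eqP <- /coxeter_gen_sq; rewrite expg2.
- by case/andP=> /eqP <- /coxeter_gen_sq; rewrite expg2.
- case/and5P=> /eqP -> /eqP -> lt_dn lt_cn /eqP mdc.
  apply: involutions_commute; rewrite ?coxeter_gen_sq //.
  by rewrite -mdc coxeter_rel.
- case/and5P=> /eqP <- /eqP <- /eqP <- /eqP <- /and3P[lt_an lt_bn /eqP mab].
  rewrite !mulgA; apply: involutions_braid; rewrite ?coxeter_gen_sq //.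
  by rewrite -mab coxeter_rel.
Qed.

Lemma apply_move_sound w st w' :
  apply_move w st = Some w' -> eval_word w = eval_word w'.
Proof.
case: st => [[p l] r] /=; case: ifP => // /andP[lr /eqP def_l] [<-].
rewrite -{1}(cat_take_drop p w) -{1}(cat_take_drop (size l) (drop p w)) def_l.
by rewrite drop_drop addnC !eval_word_cat (coxeter_move_sound lr).
Qed.

Lemma apply_moves_sound w sts w' :
  apply_moves w sts = Some w' -> eval_word w = eval_word w'.
Proof.
rewrite /apply_moves; elim: sts w => [|st sts IH] w /=; first by case=> ->.
case E: (apply_move w st) => [w1|] /=; last by elim: sts {IH}.
by move/IH <-; apply: apply_move_sound E.
Qed.

Definition right_closed (J : seq nat) (W : seq (seq nat)) :=
  forall a u, a \in W -> all [in J] u ->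
    exists2 a', a' \in W & eval_word a * eval_word u = eval_word a'.

Lemma level_ok_closed J lv W : level_ok J lv -> right_closed J W ->
  right_closed lv.1.1 (extend_words W lv).
Proof.
case: lv => [[J' R] C] /andP[_ okR] closedW /= a1 u /allpairsP[[a0 r0] /= [Wa0 Rr0 ->]].
elim/last_ind: u => [|u j IHu].
  by exists (a0 ++ r0); rewrite ?allpairs_f // /eval_word big_nil mulg1.
rewrite all_rcons => /andP[J'j J'u].
have [_ /allpairsP[[a r] /= [Wa Rr ->]] def_ar] := IHu J'u.
have /hasP[[[_ _] sts] _ /and3P[_ _ cert]] := allP (allP okR r Rr) j J'j.
move: cert; rewrite /rewrites_into.
case def_v: apply_moves => [v|] // /hasP[k _ /andP[Ju Rv]].
have [a2 Wa2 def_a2] := closedW a _ Wa Ju.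
exists (a2 ++ drop k v); first exact: allpairs_f.
rewrite -cats1 (eval_word_cat u) mulgA def_ar eval_word_cat -mulgA -eval_word_cat cats1.
rewrite (apply_moves_sound def_v) -{1}(cat_take_drop k v) eval_word_cat mulgA def_a2.
by rewrite eval_word_cat.
Qed.

Lemma chain_ok_closed J L W : chain_ok J L -> right_closed J W ->
  right_closed (last J [seq lv.1.1 | lv <- L]) (foldl extend_words W L).
Proof.
elim: L J W => [|lv L IHL] J W //= /andP[ok_lv ok_L] closedW.
exact: IHL ok_L (level_ok_closed ok_lv closedW).
Qed.

Lemma card_coxeter_le L : coset_certificate L ->
  #|<<[set s (val i) | i : 'I_n]>>| <= size (chain_words L).
Proof.
case/and3P=> ok_L /eqP top_L nil_L.
have closed_L : right_closed (iota 0 n) (chain_words L).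
  rewrite -top_L; apply: chain_ok_closed => // a [|j u] //; rewrite inE => /eqP-> _.
  by exists [::]; rewrite ?mem_head // /eval_word big_nil mulg1.
rewrite -(size_map eval_word); apply: leq_trans (card_size _).
apply/subset_leq_card/subsetP=> _ /gen_prodgP[k [c gen_c ->]].
have /fin_all_exists[d def_c] : forall i, exists d : 'I_n, c i = s d.
  by move=> i; have /imsetP[d _ ->] := gen_c i; exists d.
pose w := [seq val (d i) | i <- index_enum 'I_k].
have w_n : all [in iota 0 n] w.
  by apply/allP=> _ /mapP[i _ ->]; rewrite mem_iota ltn_ord.
have [a' La' def_a'] := closed_L [::] w nil_L w_n.
apply/mapP; exists a' => //; rewrite -def_a' /eval_word big_nil mul1g big_map.
by apply: eq_bigr => i _; rewrite def_c.
Qed.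

Lemma card_words_le W : all (all (gtn n)) W -> uniq [seq eval_word w | w <- W] ->
  size W <= #|<<[set s (val i) | i : 'I_n]>>|.
Proof.
move=> W_n uniqW; rewrite -(size_map eval_word) -(card_uniqP uniqW).
apply/subset_leq_card/subsetP=> _ /mapP[w /(allP W_n) w_n ->].
exact: eval_word_mem_gen.
Qed.

End Evaluation.

Local Open Scope group_scope.

Lemma coxeter_universal L (gT rT : finGroupType) (s : nat -> gT) (t : nat -> rT) :
    coset_certificate L -> coxeter_family s -> coxeter_family t ->
    #|<<[set s (val i) | i : 'I_n]>>| = size (chain_words L) ->
  <<[set t (val i) | i : 'I_n]>> \homg <<[set s (val i) | i : 'I_n]>>.
Proof.
move=> cert_L cox_s cox_t card_S; pose u i := (s i, t i).
have cox_u : coxeter_family u.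
  have expg_pair (x : gT * rT) k : x ^+ k = (x.1 ^+ k, x.2 ^+ k).
    by elim: k => // k IHk; rewrite !expgS IHk.
  by move=> i j lt_in lt_jn; rewrite expg_pair cox_s ?cox_t.
pose K := <<[set u (val i) | i : 'I_n]>>%G.
have fstK : fst @* K = <<[set s (val i) | i : 'I_n]>>.
  by rewrite morphim_gen ?subsetT // morphimEsub ?subsetT // -imset_comp.
have sndK : snd @* K = <<[set t (val i) | i : 'I_n]>>.
  by rewrite morphim_gen ?subsetT // morphimEsub ?subsetT // -imset_comp.
have isoSK : <<[set s (val i) | i : 'I_n]>>%G \isog K.
  rewrite isogEcard card_S card_coxeter_le // andbT /= -fstK.
  exact: morphim_homg (subsetT _).
rewrite isog_sym in isoSK; rewrite -sndK.
exact: homg_trans (morphim_homg _ (subsetT K)) (isog_hom isoSK).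
Qed.

End CoxeterWords.

Section PermTables.
Local Open Scope group_scope.
Variable N : nat.

Definition perm_table (t : seq nat) : bool :=
  [&& size t == N, all (gtn N) t & uniq t].

Definition table_fun (t : seq nat) (i : 'I_N) : 'I_N :=
  if perm_table t then insubd i (nth 0 t i) else i.

Lemma table_fun_inj t : injective (table_fun t).
Proof.
rewrite /table_fun; case t_ok: (perm_table t) => i j //.
case/and3P: t_ok => /eqP size_t t_N uniq_t.
have lt_tN k : k < N -> nth 0 t k < N.
  by move=> lt_kN; apply: (allP t_N); rewrite mem_nth ?size_t.
move/(congr1 val); rewrite !val_insubd !lt_tN // => /eqP.
by rewrite nth_uniq ?size_t // => /eqP/val_inj.
Qed.

Definition table_perm (t : seq nat) : {perm 'I_N} := perm (@table_fun_inj t).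

Lemma table_permE t i : perm_table t -> table_perm t i = nth 0 t i :> nat.
Proof.
move=> t_ok; rewrite permE /table_fun t_ok val_insubd.
case/and3P: t_ok => /eqP size_t t_N _.
by rewrite [_ < N](allP t_N) // mem_nth ?size_t.
Qed.

Definition apply_tables (ts : seq (seq nat)) (w : seq nat) (i : nat) : nat :=
  foldl (fun j k => nth 0 (nth [::] ts k) j) i w.

Variable ts : seq (seq nat).
Hypothesis ts_ok : all perm_table ts.

Definition word_perm : seq nat -> {perm 'I_N} := eval_word (table_perm \o nth [::] ts).

Lemma word_permE w i :
  all (gtn (size ts)) w -> word_perm w i = apply_tables ts w i :> nat.
Proof.
rewrite /word_perm /eval_word; elim: w i => [|k w IHw] i /=.
  by rewrite big_nil perm1.
case/andP=> lt_k w_ok; rewrite big_cons permM IHw // table_permE //.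
by apply: (allP ts_ok); rewrite mem_nth.
Qed.

Lemma eq_word_perm u v : all (gtn (size ts)) u -> all (gtn (size ts)) v ->
    all (fun i => apply_tables ts u i == apply_tables ts v i) (iota 0 N) ->
  word_perm u = word_perm v.
Proof.
move=> u_ok v_ok /allP eq_uv; apply/permP=> i; apply: val_inj.
by rewrite /= !word_permE //; apply/eqP/eq_uv; rewrite mem_iota ltn_ord.
Qed.

End PermTables.

Definition d6_edge (i j : nat) : bool :=
  (i, j) \in [:: (0, 1); (1, 2); (2, 3); (3, 4); (3, 5)].

Definition d6 (i j : nat) : nat :=
  if i == j then 1 else if d6_edge i j || d6_edge j i then 3 else 2.

Lemma d6_diag i : d6 i i = 1.
Proof. by rewrite /d6 eqxx. Qed.

(* The orbit of the basis row vectors e_1, ..., e_7 (listed first) under right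
   multiplication by M_L. *)
Definition orbit_vectors : seq (seq int) :=
  [:: [:: 1; 0; 0; 0; 0; 0; 0]; [:: 0; 1; 0; 0; 0; 0; 0]; [:: 0; 0; 1; 0; 0; 0; 0];
      [:: 0; 0; 0; 1; 0; 0; 0]; [:: 0; 0; 0; 0; 1; 0; 0]; [:: 0; 0; 0; 0; 0; 1; 0];
      [:: 0; 0; 0; 0; 0; 0; 1]; [:: 0; 0; -1; 0; 0; 0; 1]; [:: 0; 0; 0; -1; 0; 0; 1];
      [:: 0; 0; -1; -1; 1; 0; 1]; [:: 0; 0; -1; -1; 0; 1; 1]; [:: 0; -1; 0; 0; 0; 0; 1];
      [:: 0; 0; -1; 0; 0; 1; 0]; [:: 0; 0; 0; -1; 0; 1; 0]; [:: 0; -1; 0; -1; 1; 0; 1];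
      [:: 0; 0; -1; -1; 1; 1; 0]; [:: 0; -1; 0; -1; 0; 1; 1]; [:: -1; 0; 0; 0; 0; 0; 1];
      [:: 0; -1; 0; 0; 0; 1; 0]; [:: 0; 0; -1; 0; 1; 0; 0]; [:: 0; 0; 0; -1; 1; 0; 0];
      [:: -1; 0; 0; -1; 1; 0; 1]; [:: 0; -1; -1; 0; 1; 0; 1]; [:: 0; -1; 0; -1; 1; 1; 0];
      [:: -1; 0; 0; -1; 0; 1; 1]; [:: 0; -1; -1; 0; 0; 1; 1]; [:: -1; 0; 0; 0; 0; 1; 0];
      [:: 0; -1; 0; 0; 1; 0; 0]; [:: 0; -1; -1; -1; 0; 1; 1]; [:: -1; 0; -1; 0; 1; 0; 1];
      [:: -1; 0; 0; -1; 1; 1; 0]; [:: 0; -1; -1; 0; 1; 1; 0]; [:: 0; -1; -2; -1; 1; 1; 1];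
      [:: -1; 0; -1; 0; 0; 1; 1]; [:: -1; 0; 0; 0; 1; 0; 0]; [:: -1; 0; -1; -1; 0; 1; 1];
      [:: 0; -1; -1; -1; 1; 0; 1]; [:: -1; -1; 0; 0; 1; 0; 1]; [:: -1; 0; -1; 0; 1; 1; 0];
      [:: -1; 0; -2; -1; 1; 1; 1]; [:: 0; -1; -1; -2; 1; 1; 1]; [:: 0; -2; -1; -1; 1; 1; 1];
      [:: -1; -1; 0; 0; 0; 1; 1]; [:: -1; 0; -1; -1; 1; 0; 1]; [:: -1; -1; 0; -1; 0; 1; 1];
      [:: 0; -1; -1; -1; 1; 1; 0]; [:: -1; -1; 0; 0; 1; 1; 0]; [:: -1; -1; -1; -1; 1; 0; 2];
      [:: -1; 0; -1; -2; 1; 1; 1]; [:: -1; -2; 0; -1; 1; 1; 1]; [:: -2; 0; -1; -1; 1; 1; 1];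
      [:: -1; -1; -1; -1; 0; 1; 2]; [:: -1; -1; 0; -1; 1; 0; 1]; [:: -1; 0; -1; -1; 1; 1; 0];
      [:: -1; -1; -1; 0; 0; 1; 1]; [:: -1; -1; -2; -2; 1; 1; 2]; [:: -1; -1; -1; -1; 1; 2; 0];
      [:: -1; -1; 0; -2; 1; 1; 1]; [:: -2; -1; 0; -1; 1; 1; 1]; [:: -1; -2; -1; 0; 1; 1; 1];
      [:: -1; -2; -2; -1; 1; 1; 2]; [:: -1; -1; -1; -1; 0; 2; 1]; [:: -1; -1; -1; 0; 1; 0; 1];
      [:: -1; -1; 0; -1; 1; 1; 0]; [:: -1; -2; -1; -2; 1; 1; 2]; [:: -1; -1; -2; -2; 1; 2; 1];
      [:: -1; -1; -1; -1; 2; 1; 0]; [:: -1; -1; -2; 0; 1; 1; 1]; [:: -2; -1; -1; 0; 1; 1; 1];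
      [:: -2; -1; -2; -1; 1; 1; 2]; [:: -1; -2; -2; -1; 1; 2; 1]; [:: -1; -1; -1; -1; 2; 0; 1];
      [:: -1; -1; -1; 0; 1; 1; 0]; [:: -1; -1; -2; -1; 1; 1; 1]; [:: -2; -1; -1; -2; 1; 1; 2];
      [:: -1; -2; -1; -2; 1; 2; 1]; [:: -1; -1; -2; -2; 2; 1; 1]; [:: -2; -2; -1; -1; 1; 1; 2];
      [:: -2; -1; -2; -1; 1; 2; 1]; [:: -1; -2; -2; -1; 2; 1; 1]; [:: -1; -1; -1; -2; 1; 1; 1];
      [:: -1; -2; -1; -1; 1; 1; 1]; [:: -2; -1; -1; -2; 1; 2; 1]; [:: -1; -2; -1; -2; 2; 1; 1];
      [:: -2; -2; -1; -1; 1; 2; 1]; [:: -2; -1; -2; -1; 2; 1; 1]; [:: -2; -1; -1; -1; 1; 1; 1];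
      [:: -2; -1; -1; -2; 2; 1; 1]; [:: -2; -2; -1; -1; 2; 1; 1]; [:: -2; -2; -2; -2; 1; 2; 2];
      [:: -2; -2; -2; -2; 2; 1; 2]; [:: -2; -2; -2; -2; 2; 2; 1]]%Z.

Definition int_vec_mul (v : seq int) (M : seq (seq int)) : seq int :=
  mkseq (fun j =>
    foldr (fun k x => nth 0 v k * nth 0 (nth [::] M k) j + x)%R 0%R (iota 0 7)) 7.

Definition tperm_index (a b j : nat) : nat :=
  if j == a.-1 then b.-1 else if j == b.-1 then a.-1 else j.

Definition tperm_rows (a b : nat) : seq (seq int) :=
  mkseq (fun i => mkseq (fun j => Posz (i == tperm_index a b j)) 7) 7.

Definition gen_rows : seq (seq (seq int)) :=
  [:: tperm_rows 1 2; tperm_rows 2 3; tperm_rows 3 4; tperm_rows 5 6; tperm_rows 6 7;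
      A_rows].

Definition gen_tables : seq (seq nat) :=
  [seq [seq index (int_vec_mul v M) orbit_vectors | v <- orbit_vectors] | M <- gen_rows].

(* The Coxeter generators s_1, ..., s_6 as words in the generators indexed as in
   gen_rows: s_1 = (56), s_2 = (67), s_3 = (34) A, s_4 = (23), s_5 = (12), s_6 = (34);
   conversely A = s_3 s_6. *)
Definition cox_gen_words : seq (seq nat) :=
  [:: [:: 3]; [:: 4]; [:: 2; 5]; [:: 1]; [:: 0]; [:: 2]].

Definition mx_gen_cox_words : seq (seq nat) :=
  [:: [:: 4]; [:: 3]; [:: 5]; [:: 0]; [:: 1]; [:: 2; 5]].

Definition expand_word (w : seq nat) : seq nat :=
  flatten [seq nth [::] cox_gen_words k | k <- w].

(* Coset certificate along A_1 < A_2 < A_3 < D_4 < D_5 < D_6, of successive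
   indices 2, 3, 4, 8, 10, 12. *)
Definition d6_levels : seq coset_level :=
  [:: ([:: 4],
       [:: [::]; [:: 4]],
       [:: ([::], 4, [::]);
           ([:: 4], 4, [:: (0, [:: 4; 4], [::])])]);
      ([:: 3; 4],
       [:: [::]; [:: 3]; [:: 3; 4]],
       [:: ([::], 3, [::]);
           ([::], 4, [::]);
           ([:: 3], 3, [:: (0, [:: 3; 3], [::])]);
           ([:: 3], 4, [::]);
           ([:: 3; 4], 3, [:: (0, [:: 3; 4; 3], [:: 4; 3; 4])]);
           ([:: 3; 4], 4, [:: (1, [:: 4; 4], [::])])]);
      ([:: 3; 4; 5],
       [:: [::]; [:: 5]; [:: 5; 3]; [:: 5; 3; 4]],
       [:: ([::], 3, [::]);
           ([::], 4, [::]);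
           ([::], 5, [::]);
           ([:: 5], 3, [::]);
           ([:: 5], 4, [:: (0, [:: 5; 4], [:: 4; 5])]);
           ([:: 5], 5, [:: (0, [:: 5; 5], [::])]);
           ([:: 5; 3], 3, [:: (1, [:: 3; 3], [::])]);
           ([:: 5; 3], 4, [::]);
           ([:: 5; 3], 5, [:: (0, [:: 5; 3; 5], [:: 3; 5; 3])]);
           ([:: 5; 3; 4], 3, [:: (1, [:: 3; 4; 3], [:: 4; 3; 4]);
              (0, [:: 5; 4], [:: 4; 5])]);
           ([:: 5; 3; 4], 4, [:: (2, [:: 4; 4], [::])]);
           ([:: 5; 3; 4], 5, [:: (2, [:: 4; 5], [:: 5; 4]);
              (0, [:: 5; 3; 5], [:: 3; 5; 3])])]);
      ([:: 2; 3; 4; 5],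
       [:: [::]; [:: 2]; [:: 2; 3]; [:: 2; 3; 4]; [:: 2; 3; 5]; [:: 2; 3; 4; 5];
           [:: 2; 3; 4; 5; 3]; [:: 2; 3; 4; 5; 3; 2]],
       [:: ([::], 2, [::]);
           ([::], 3, [::]);
           ([::], 4, [::]);
           ([::], 5, [::]);
           ([:: 2], 2, [:: (0, [:: 2; 2], [::])]);
           ([:: 2], 3, [::]);
           ([:: 2], 4, [:: (0, [:: 2; 4], [:: 4; 2])]);
           ([:: 2], 5, [:: (0, [:: 2; 5], [:: 5; 2])]);
           ([:: 2; 3], 2, [:: (0, [:: 2; 3; 2], [:: 3; 2; 3])]);
           ([:: 2; 3], 3, [:: (1, [:: 3; 3], [::])]);
           ([:: 2; 3], 4, [::]);
           ([:: 2; 3], 5, [::]);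
           ([:: 2; 3; 4], 2, [:: (2, [:: 4; 2], [:: 2; 4]);
              (0, [:: 2; 3; 2], [:: 3; 2; 3])]);
           ([:: 2; 3; 4], 3, [:: (1, [:: 3; 4; 3], [:: 4; 3; 4]);
              (0, [:: 2; 4], [:: 4; 2])]);
           ([:: 2; 3; 4], 4, [:: (2, [:: 4; 4], [::])]);
           ([:: 2; 3; 4], 5, [::]);
           ([:: 2; 3; 5], 2, [:: (2, [:: 5; 2], [:: 2; 5]);
              (0, [:: 2; 3; 2], [:: 3; 2; 3])]);
           ([:: 2; 3; 5], 3, [:: (1, [:: 3; 5; 3], [:: 5; 3; 5]);
              (0, [:: 2; 5], [:: 5; 2])]);
           ([:: 2; 3; 5], 4, [:: (2, [:: 5; 4], [:: 4; 5])]);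
           ([:: 2; 3; 5], 5, [:: (2, [:: 5; 5], [::])]);
           ([:: 2; 3; 4; 5], 2, [:: (3, [:: 5; 2], [:: 2; 5]); (2, [:: 4; 2], [:: 2; 4]);
              (0, [:: 2; 3; 2], [:: 3; 2; 3])]);
           ([:: 2; 3; 4; 5], 3, [::]);
           ([:: 2; 3; 4; 5], 4, [:: (2, [:: 4; 5], [:: 5; 4]); (3, [:: 4; 4], [::])]);
           ([:: 2; 3; 4; 5], 5, [:: (3, [:: 5; 5], [::])]);
           ([:: 2; 3; 4; 5; 3], 2, [::]);
           ([:: 2; 3; 4; 5; 3], 3, [:: (4, [:: 3; 3], [::])]);
           ([:: 2; 3; 4; 5; 3], 4, [:: (2, [:: 4; 5], [:: 5; 4]);
              (3, [:: 4; 3; 4], [:: 3; 4; 3]); (1, [:: 3; 5; 3], [:: 5; 3; 5]);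
              (0, [:: 2; 5], [:: 5; 2]); (3, [:: 5; 4], [:: 4; 5])]);
           ([:: 2; 3; 4; 5; 3], 5, [:: (3, [:: 5; 3; 5], [:: 3; 5; 3]);
              (1, [:: 3; 4; 3], [:: 4; 3; 4]); (0, [:: 2; 4], [:: 4; 2])]);
           ([:: 2; 3; 4; 5; 3; 2], 2, [:: (5, [:: 2; 2], [::])]);
           ([:: 2; 3; 4; 5; 3; 2], 3, [:: (4, [:: 3; 2; 3], [:: 2; 3; 2]);
              (3, [:: 5; 2], [:: 2; 5]); (2, [:: 4; 2], [:: 2; 4]);
              (0, [:: 2; 3; 2], [:: 3; 2; 3])]);
           ([:: 2; 3; 4; 5; 3; 2], 4, [:: (2, [:: 4; 5], [:: 5; 4]);
              (5, [:: 2; 4], [:: 4; 2]); (3, [:: 4; 3; 4], [:: 3; 4; 3]);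
              (1, [:: 3; 5; 3], [:: 5; 3; 5]); (0, [:: 2; 5], [:: 5; 2]);
              (3, [:: 5; 4], [:: 4; 5])]);
           ([:: 2; 3; 4; 5; 3; 2], 5, [:: (5, [:: 2; 5], [:: 5; 2]);
              (3, [:: 5; 3; 5], [:: 3; 5; 3]); (1, [:: 3; 4; 3], [:: 4; 3; 4]);
              (0, [:: 2; 4], [:: 4; 2])])]);
      ([:: 1; 2; 3; 4; 5],
       [:: [::]; [:: 1]; [:: 1; 2]; [:: 1; 2; 3]; [:: 1; 2; 3; 4]; [:: 1; 2; 3; 5];
           [:: 1; 2; 3; 4; 5]; [:: 1; 2; 3; 4; 5; 3]; [:: 1; 2; 3; 4; 5; 3; 2];
           [:: 1; 2; 3; 4; 5; 3; 2; 1]],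
       [:: ([::], 1, [::]);
           ([::], 2, [::]);
           ([::], 3, [::]);
           ([::], 4, [::]);
           ([::], 5, [::]);
           ([:: 1], 1, [:: (0, [:: 1; 1], [::])]);
           ([:: 1], 2, [::]);
           ([:: 1], 3, [:: (0, [:: 1; 3], [:: 3; 1])]);
           ([:: 1], 4, [:: (0, [:: 1; 4], [:: 4; 1])]);
           ([:: 1], 5, [:: (0, [:: 1; 5], [:: 5; 1])]);
           ([:: 1; 2], 1, [:: (0, [:: 1; 2; 1], [:: 2; 1; 2])]);
           ([:: 1; 2], 2, [:: (1, [:: 2; 2], [::])]);
           ([:: 1; 2], 3, [::]);
           ([:: 1; 2], 4, [:: (1, [:: 2; 4], [:: 4; 2]); (0, [:: 1; 4], [:: 4; 1])]);
           ([:: 1; 2], 5, [:: (1, [:: 2; 5], [:: 5; 2]); (0, [:: 1; 5], [:: 5; 1])]);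
           ([:: 1; 2; 3], 1, [:: (2, [:: 3; 1], [:: 1; 3]);
              (0, [:: 1; 2; 1], [:: 2; 1; 2])]);
           ([:: 1; 2; 3], 2, [:: (1, [:: 2; 3; 2], [:: 3; 2; 3]);
              (0, [:: 1; 3], [:: 3; 1])]);
           ([:: 1; 2; 3], 3, [:: (2, [:: 3; 3], [::])]);
           ([:: 1; 2; 3], 4, [::]);
           ([:: 1; 2; 3], 5, [::]);
           ([:: 1; 2; 3; 4], 1, [:: (3, [:: 4; 1], [:: 1; 4]); (2, [:: 3; 1], [:: 1; 3]);
              (0, [:: 1; 2; 1], [:: 2; 1; 2])]);
           ([:: 1; 2; 3; 4], 2, [:: (3, [:: 4; 2], [:: 2; 4]);
              (1, [:: 2; 3; 2], [:: 3; 2; 3]); (0, [:: 1; 3], [:: 3; 1])]);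
           ([:: 1; 2; 3; 4], 3, [:: (2, [:: 3; 4; 3], [:: 4; 3; 4]);
              (1, [:: 2; 4], [:: 4; 2]); (0, [:: 1; 4], [:: 4; 1])]);
           ([:: 1; 2; 3; 4], 4, [:: (3, [:: 4; 4], [::])]);
           ([:: 1; 2; 3; 4], 5, [::]);
           ([:: 1; 2; 3; 5], 1, [:: (3, [:: 5; 1], [:: 1; 5]); (2, [:: 3; 1], [:: 1; 3]);
              (0, [:: 1; 2; 1], [:: 2; 1; 2])]);
           ([:: 1; 2; 3; 5], 2, [:: (3, [:: 5; 2], [:: 2; 5]);
              (1, [:: 2; 3; 2], [:: 3; 2; 3]); (0, [:: 1; 3], [:: 3; 1])]);
           ([:: 1; 2; 3; 5], 3, [:: (2, [:: 3; 5; 3], [:: 5; 3; 5]);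
              (1, [:: 2; 5], [:: 5; 2]); (0, [:: 1; 5], [:: 5; 1])]);
           ([:: 1; 2; 3; 5], 4, [:: (3, [:: 5; 4], [:: 4; 5])]);
           ([:: 1; 2; 3; 5], 5, [:: (3, [:: 5; 5], [::])]);
           ([:: 1; 2; 3; 4; 5], 1, [:: (4, [:: 5; 1], [:: 1; 5]);
              (3, [:: 4; 1], [:: 1; 4]); (2, [:: 3; 1], [:: 1; 3]);
              (0, [:: 1; 2; 1], [:: 2; 1; 2])]);
           ([:: 1; 2; 3; 4; 5], 2, [:: (4, [:: 5; 2], [:: 2; 5]);
              (3, [:: 4; 2], [:: 2; 4]); (1, [:: 2; 3; 2], [:: 3; 2; 3]);
              (0, [:: 1; 3], [:: 3; 1])]);
           ([:: 1; 2; 3; 4; 5], 3, [::]);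
           ([:: 1; 2; 3; 4; 5], 4, [:: (3, [:: 4; 5], [:: 5; 4]); (4, [:: 4; 4], [::])]);
           ([:: 1; 2; 3; 4; 5], 5, [:: (4, [:: 5; 5], [::])]);
           ([:: 1; 2; 3; 4; 5; 3], 1, [:: (5, [:: 3; 1], [:: 1; 3]);
              (4, [:: 5; 1], [:: 1; 5]); (3, [:: 4; 1], [:: 1; 4]);
              (2, [:: 3; 1], [:: 1; 3]); (0, [:: 1; 2; 1], [:: 2; 1; 2])]);
           ([:: 1; 2; 3; 4; 5; 3], 2, [::]);
           ([:: 1; 2; 3; 4; 5; 3], 3, [:: (5, [:: 3; 3], [::])]);
           ([:: 1; 2; 3; 4; 5; 3], 4, [:: (3, [:: 4; 5], [:: 5; 4]);
              (4, [:: 4; 3; 4], [:: 3; 4; 3]); (2, [:: 3; 5; 3], [:: 5; 3; 5]);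
              (1, [:: 2; 5], [:: 5; 2]); (0, [:: 1; 5], [:: 5; 1]);
              (4, [:: 5; 4], [:: 4; 5])]);
           ([:: 1; 2; 3; 4; 5; 3], 5, [:: (4, [:: 5; 3; 5], [:: 3; 5; 3]);
              (2, [:: 3; 4; 3], [:: 4; 3; 4]); (1, [:: 2; 4], [:: 4; 2]);
              (0, [:: 1; 4], [:: 4; 1])]);
           ([:: 1; 2; 3; 4; 5; 3; 2], 1, [::]);
           ([:: 1; 2; 3; 4; 5; 3; 2], 2, [:: (6, [:: 2; 2], [::])]);
           ([:: 1; 2; 3; 4; 5; 3; 2], 3, [:: (5, [:: 3; 2; 3], [:: 2; 3; 2]);
              (4, [:: 5; 2], [:: 2; 5]); (3, [:: 4; 2], [:: 2; 4]);
              (1, [:: 2; 3; 2], [:: 3; 2; 3]); (0, [:: 1; 3], [:: 3; 1])]);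
           ([:: 1; 2; 3; 4; 5; 3; 2], 4, [:: (3, [:: 4; 5], [:: 5; 4]);
              (6, [:: 2; 4], [:: 4; 2]); (4, [:: 4; 3; 4], [:: 3; 4; 3]);
              (2, [:: 3; 5; 3], [:: 5; 3; 5]); (1, [:: 2; 5], [:: 5; 2]);
              (0, [:: 1; 5], [:: 5; 1]); (4, [:: 5; 4], [:: 4; 5])]);
           ([:: 1; 2; 3; 4; 5; 3; 2], 5, [:: (6, [:: 2; 5], [:: 5; 2]);
              (4, [:: 5; 3; 5], [:: 3; 5; 3]); (2, [:: 3; 4; 3], [:: 4; 3; 4]);
              (1, [:: 2; 4], [:: 4; 2]); (0, [:: 1; 4], [:: 4; 1])]);
           ([:: 1; 2; 3; 4; 5; 3; 2; 1], 1, [:: (7, [:: 1; 1], [::])]);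
           ([:: 1; 2; 3; 4; 5; 3; 2; 1], 2, [:: (6, [:: 2; 1; 2], [:: 1; 2; 1]);
              (5, [:: 3; 1], [:: 1; 3]); (4, [:: 5; 1], [:: 1; 5]);
              (3, [:: 4; 1], [:: 1; 4]); (2, [:: 3; 1], [:: 1; 3]);
              (0, [:: 1; 2; 1], [:: 2; 1; 2])]);
           ([:: 1; 2; 3; 4; 5; 3; 2; 1], 3, [:: (7, [:: 1; 3], [:: 3; 1]);
              (5, [:: 3; 2; 3], [:: 2; 3; 2]); (4, [:: 5; 2], [:: 2; 5]);
              (3, [:: 4; 2], [:: 2; 4]); (1, [:: 2; 3; 2], [:: 3; 2; 3]);
              (0, [:: 1; 3], [:: 3; 1])]);
           ([:: 1; 2; 3; 4; 5; 3; 2; 1], 4, [:: (3, [:: 4; 5], [:: 5; 4]);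
              (7, [:: 1; 4], [:: 4; 1]); (6, [:: 2; 4], [:: 4; 2]);
              (4, [:: 4; 3; 4], [:: 3; 4; 3]); (2, [:: 3; 5; 3], [:: 5; 3; 5]);
              (1, [:: 2; 5], [:: 5; 2]); (0, [:: 1; 5], [:: 5; 1]);
              (4, [:: 5; 4], [:: 4; 5])]);
           ([:: 1; 2; 3; 4; 5; 3; 2; 1], 5, [:: (7, [:: 1; 5], [:: 5; 1]);
              (6, [:: 2; 5], [:: 5; 2]); (4, [:: 5; 3; 5], [:: 3; 5; 3]);
              (2, [:: 3; 4; 3], [:: 4; 3; 4]); (1, [:: 2; 4], [:: 4; 2]);
              (0, [:: 1; 4], [:: 4; 1])])]);
      ([:: 0; 1; 2; 3; 4; 5],
       [:: [::]; [:: 0]; [:: 0; 1]; [:: 0; 1; 2]; [:: 0; 1; 2; 3]; [:: 0; 1; 2; 3; 4];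
           [:: 0; 1; 2; 3; 5]; [:: 0; 1; 2; 3; 4; 5]; [:: 0; 1; 2; 3; 4; 5; 3];
           [:: 0; 1; 2; 3; 4; 5; 3; 2]; [:: 0; 1; 2; 3; 4; 5; 3; 2; 1];
           [:: 0; 1; 2; 3; 4; 5; 3; 2; 1; 0]],
       [:: ([::], 0, [::]);
           ([::], 1, [::]);
           ([::], 2, [::]);
           ([::], 3, [::]);
           ([::], 4, [::]);
           ([::], 5, [::]);
           ([:: 0], 0, [:: (0, [:: 0; 0], [::])]);
           ([:: 0], 1, [::]);
           ([:: 0], 2, [:: (0, [:: 0; 2], [:: 2; 0])]);
           ([:: 0], 3, [:: (0, [:: 0; 3], [:: 3; 0])]);
           ([:: 0], 4, [:: (0, [:: 0; 4], [:: 4; 0])]);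
           ([:: 0], 5, [:: (0, [:: 0; 5], [:: 5; 0])]);
           ([:: 0; 1], 0, [:: (0, [:: 0; 1; 0], [:: 1; 0; 1])]);
           ([:: 0; 1], 1, [:: (1, [:: 1; 1], [::])]);
           ([:: 0; 1], 2, [::]);
           ([:: 0; 1], 3, [:: (1, [:: 1; 3], [:: 3; 1]); (0, [:: 0; 3], [:: 3; 0])]);
           ([:: 0; 1], 4, [:: (1, [:: 1; 4], [:: 4; 1]); (0, [:: 0; 4], [:: 4; 0])]);
           ([:: 0; 1], 5, [:: (1, [:: 1; 5], [:: 5; 1]); (0, [:: 0; 5], [:: 5; 0])]);
           ([:: 0; 1; 2], 0, [:: (2, [:: 2; 0], [:: 0; 2]);
              (0, [:: 0; 1; 0], [:: 1; 0; 1])]);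
           ([:: 0; 1; 2], 1, [:: (1, [:: 1; 2; 1], [:: 2; 1; 2]);
              (0, [:: 0; 2], [:: 2; 0])]);
           ([:: 0; 1; 2], 2, [:: (2, [:: 2; 2], [::])]);
           ([:: 0; 1; 2], 3, [::]);
           ([:: 0; 1; 2], 4, [:: (2, [:: 2; 4], [:: 4; 2]); (1, [:: 1; 4], [:: 4; 1]);
              (0, [:: 0; 4], [:: 4; 0])]);
           ([:: 0; 1; 2], 5, [:: (2, [:: 2; 5], [:: 5; 2]); (1, [:: 1; 5], [:: 5; 1]);
              (0, [:: 0; 5], [:: 5; 0])]);
           ([:: 0; 1; 2; 3], 0, [:: (3, [:: 3; 0], [:: 0; 3]); (2, [:: 2; 0], [:: 0; 2]);
              (0, [:: 0; 1; 0], [:: 1; 0; 1])]);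
           ([:: 0; 1; 2; 3], 1, [:: (3, [:: 3; 1], [:: 1; 3]);
              (1, [:: 1; 2; 1], [:: 2; 1; 2]); (0, [:: 0; 2], [:: 2; 0])]);
           ([:: 0; 1; 2; 3], 2, [:: (2, [:: 2; 3; 2], [:: 3; 2; 3]);
              (1, [:: 1; 3], [:: 3; 1]); (0, [:: 0; 3], [:: 3; 0])]);
           ([:: 0; 1; 2; 3], 3, [:: (3, [:: 3; 3], [::])]);
           ([:: 0; 1; 2; 3], 4, [::]);
           ([:: 0; 1; 2; 3], 5, [::]);
           ([:: 0; 1; 2; 3; 4], 0, [:: (4, [:: 4; 0], [:: 0; 4]);
              (3, [:: 3; 0], [:: 0; 3]); (2, [:: 2; 0], [:: 0; 2]);
              (0, [:: 0; 1; 0], [:: 1; 0; 1])]);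
           ([:: 0; 1; 2; 3; 4], 1, [:: (4, [:: 4; 1], [:: 1; 4]);
              (3, [:: 3; 1], [:: 1; 3]); (1, [:: 1; 2; 1], [:: 2; 1; 2]);
              (0, [:: 0; 2], [:: 2; 0])]);
           ([:: 0; 1; 2; 3; 4], 2, [:: (4, [:: 4; 2], [:: 2; 4]);
              (2, [:: 2; 3; 2], [:: 3; 2; 3]); (1, [:: 1; 3], [:: 3; 1]);
              (0, [:: 0; 3], [:: 3; 0])]);
           ([:: 0; 1; 2; 3; 4], 3, [:: (3, [:: 3; 4; 3], [:: 4; 3; 4]);
              (2, [:: 2; 4], [:: 4; 2]); (1, [:: 1; 4], [:: 4; 1]);
              (0, [:: 0; 4], [:: 4; 0])]);
           ([:: 0; 1; 2; 3; 4], 4, [:: (4, [:: 4; 4], [::])]);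
           ([:: 0; 1; 2; 3; 4], 5, [::]);
           ([:: 0; 1; 2; 3; 5], 0, [:: (4, [:: 5; 0], [:: 0; 5]);
              (3, [:: 3; 0], [:: 0; 3]); (2, [:: 2; 0], [:: 0; 2]);
              (0, [:: 0; 1; 0], [:: 1; 0; 1])]);
           ([:: 0; 1; 2; 3; 5], 1, [:: (4, [:: 5; 1], [:: 1; 5]);
              (3, [:: 3; 1], [:: 1; 3]); (1, [:: 1; 2; 1], [:: 2; 1; 2]);
              (0, [:: 0; 2], [:: 2; 0])]);
           ([:: 0; 1; 2; 3; 5], 2, [:: (4, [:: 5; 2], [:: 2; 5]);
              (2, [:: 2; 3; 2], [:: 3; 2; 3]); (1, [:: 1; 3], [:: 3; 1]);
              (0, [:: 0; 3], [:: 3; 0])]);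
           ([:: 0; 1; 2; 3; 5], 3, [:: (3, [:: 3; 5; 3], [:: 5; 3; 5]);
              (2, [:: 2; 5], [:: 5; 2]); (1, [:: 1; 5], [:: 5; 1]);
              (0, [:: 0; 5], [:: 5; 0])]);
           ([:: 0; 1; 2; 3; 5], 4, [:: (4, [:: 5; 4], [:: 4; 5])]);
           ([:: 0; 1; 2; 3; 5], 5, [:: (4, [:: 5; 5], [::])]);
           ([:: 0; 1; 2; 3; 4; 5], 0, [:: (5, [:: 5; 0], [:: 0; 5]);
              (4, [:: 4; 0], [:: 0; 4]); (3, [:: 3; 0], [:: 0; 3]);
              (2, [:: 2; 0], [:: 0; 2]); (0, [:: 0; 1; 0], [:: 1; 0; 1])]);
           ([:: 0; 1; 2; 3; 4; 5], 1, [:: (5, [:: 5; 1], [:: 1; 5]);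
              (4, [:: 4; 1], [:: 1; 4]); (3, [:: 3; 1], [:: 1; 3]);
              (1, [:: 1; 2; 1], [:: 2; 1; 2]); (0, [:: 0; 2], [:: 2; 0])]);
           ([:: 0; 1; 2; 3; 4; 5], 2, [:: (5, [:: 5; 2], [:: 2; 5]);
              (4, [:: 4; 2], [:: 2; 4]); (2, [:: 2; 3; 2], [:: 3; 2; 3]);
              (1, [:: 1; 3], [:: 3; 1]); (0, [:: 0; 3], [:: 3; 0])]);
           ([:: 0; 1; 2; 3; 4; 5], 3, [::]);
           ([:: 0; 1; 2; 3; 4; 5], 4, [:: (4, [:: 4; 5], [:: 5; 4]);
              (5, [:: 4; 4], [::])]);
           ([:: 0; 1; 2; 3; 4; 5], 5, [:: (5, [:: 5; 5], [::])]);
           ([:: 0; 1; 2; 3; 4; 5; 3], 0, [:: (6, [:: 3; 0], [:: 0; 3]);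
              (5, [:: 5; 0], [:: 0; 5]); (4, [:: 4; 0], [:: 0; 4]);
              (3, [:: 3; 0], [:: 0; 3]); (2, [:: 2; 0], [:: 0; 2]);
              (0, [:: 0; 1; 0], [:: 1; 0; 1])]);
           ([:: 0; 1; 2; 3; 4; 5; 3], 1, [:: (6, [:: 3; 1], [:: 1; 3]);
              (5, [:: 5; 1], [:: 1; 5]); (4, [:: 4; 1], [:: 1; 4]);
              (3, [:: 3; 1], [:: 1; 3]); (1, [:: 1; 2; 1], [:: 2; 1; 2]);
              (0, [:: 0; 2], [:: 2; 0])]);
           ([:: 0; 1; 2; 3; 4; 5; 3], 2, [::]);
           ([:: 0; 1; 2; 3; 4; 5; 3], 3, [:: (6, [:: 3; 3], [::])]);
           ([:: 0; 1; 2; 3; 4; 5; 3], 4, [:: (4, [:: 4; 5], [:: 5; 4]);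
              (5, [:: 4; 3; 4], [:: 3; 4; 3]); (3, [:: 3; 5; 3], [:: 5; 3; 5]);
              (2, [:: 2; 5], [:: 5; 2]); (1, [:: 1; 5], [:: 5; 1]);
              (0, [:: 0; 5], [:: 5; 0]); (5, [:: 5; 4], [:: 4; 5])]);
           ([:: 0; 1; 2; 3; 4; 5; 3], 5, [:: (5, [:: 5; 3; 5], [:: 3; 5; 3]);
              (3, [:: 3; 4; 3], [:: 4; 3; 4]); (2, [:: 2; 4], [:: 4; 2]);
              (1, [:: 1; 4], [:: 4; 1]); (0, [:: 0; 4], [:: 4; 0])]);
           ([:: 0; 1; 2; 3; 4; 5; 3; 2], 0, [:: (7, [:: 2; 0], [:: 0; 2]);
              (6, [:: 3; 0], [:: 0; 3]); (5, [:: 5; 0], [:: 0; 5]);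
              (4, [:: 4; 0], [:: 0; 4]); (3, [:: 3; 0], [:: 0; 3]);
              (2, [:: 2; 0], [:: 0; 2]); (0, [:: 0; 1; 0], [:: 1; 0; 1])]);
           ([:: 0; 1; 2; 3; 4; 5; 3; 2], 1, [::]);
           ([:: 0; 1; 2; 3; 4; 5; 3; 2], 2, [:: (7, [:: 2; 2], [::])]);
           ([:: 0; 1; 2; 3; 4; 5; 3; 2], 3, [:: (6, [:: 3; 2; 3], [:: 2; 3; 2]);
              (5, [:: 5; 2], [:: 2; 5]); (4, [:: 4; 2], [:: 2; 4]);
              (2, [:: 2; 3; 2], [:: 3; 2; 3]); (1, [:: 1; 3], [:: 3; 1]);
              (0, [:: 0; 3], [:: 3; 0])]);
           ([:: 0; 1; 2; 3; 4; 5; 3; 2], 4, [:: (4, [:: 4; 5], [:: 5; 4]);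
              (7, [:: 2; 4], [:: 4; 2]); (5, [:: 4; 3; 4], [:: 3; 4; 3]);
              (3, [:: 3; 5; 3], [:: 5; 3; 5]); (2, [:: 2; 5], [:: 5; 2]);
              (1, [:: 1; 5], [:: 5; 1]); (0, [:: 0; 5], [:: 5; 0]);
              (5, [:: 5; 4], [:: 4; 5])]);
           ([:: 0; 1; 2; 3; 4; 5; 3; 2], 5, [:: (7, [:: 2; 5], [:: 5; 2]);
              (5, [:: 5; 3; 5], [:: 3; 5; 3]); (3, [:: 3; 4; 3], [:: 4; 3; 4]);
              (2, [:: 2; 4], [:: 4; 2]); (1, [:: 1; 4], [:: 4; 1]);
              (0, [:: 0; 4], [:: 4; 0])]);
           ([:: 0; 1; 2; 3; 4; 5; 3; 2; 1], 0, [::]);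
           ([:: 0; 1; 2; 3; 4; 5; 3; 2; 1], 1, [:: (8, [:: 1; 1], [::])]);
           ([:: 0; 1; 2; 3; 4; 5; 3; 2; 1], 2, [:: (7, [:: 2; 1; 2], [:: 1; 2; 1]);
              (6, [:: 3; 1], [:: 1; 3]); (5, [:: 5; 1], [:: 1; 5]);
              (4, [:: 4; 1], [:: 1; 4]); (3, [:: 3; 1], [:: 1; 3]);
              (1, [:: 1; 2; 1], [:: 2; 1; 2]); (0, [:: 0; 2], [:: 2; 0])]);
           ([:: 0; 1; 2; 3; 4; 5; 3; 2; 1], 3, [:: (8, [:: 1; 3], [:: 3; 1]);
              (6, [:: 3; 2; 3], [:: 2; 3; 2]); (5, [:: 5; 2], [:: 2; 5]);
              (4, [:: 4; 2], [:: 2; 4]); (2, [:: 2; 3; 2], [:: 3; 2; 3]);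
              (1, [:: 1; 3], [:: 3; 1]); (0, [:: 0; 3], [:: 3; 0])]);
           ([:: 0; 1; 2; 3; 4; 5; 3; 2; 1], 4, [:: (4, [:: 4; 5], [:: 5; 4]);
              (8, [:: 1; 4], [:: 4; 1]); (7, [:: 2; 4], [:: 4; 2]);
              (5, [:: 4; 3; 4], [:: 3; 4; 3]); (3, [:: 3; 5; 3], [:: 5; 3; 5]);
              (2, [:: 2; 5], [:: 5; 2]); (1, [:: 1; 5], [:: 5; 1]);
              (0, [:: 0; 5], [:: 5; 0]); (5, [:: 5; 4], [:: 4; 5])]);
           ([:: 0; 1; 2; 3; 4; 5; 3; 2; 1], 5, [:: (8, [:: 1; 5], [:: 5; 1]);
              (7, [:: 2; 5], [:: 5; 2]); (5, [:: 5; 3; 5], [:: 3; 5; 3]);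
              (3, [:: 3; 4; 3], [:: 4; 3; 4]); (2, [:: 2; 4], [:: 4; 2]);
              (1, [:: 1; 4], [:: 4; 1]); (0, [:: 0; 4], [:: 4; 0])]);
           ([:: 0; 1; 2; 3; 4; 5; 3; 2; 1; 0], 0, [:: (9, [:: 0; 0], [::])]);
           ([:: 0; 1; 2; 3; 4; 5; 3; 2; 1; 0], 1, [:: (8, [:: 1; 0; 1], [:: 0; 1; 0]);
              (7, [:: 2; 0], [:: 0; 2]); (6, [:: 3; 0], [:: 0; 3]);
              (5, [:: 5; 0], [:: 0; 5]); (4, [:: 4; 0], [:: 0; 4]);
              (3, [:: 3; 0], [:: 0; 3]); (2, [:: 2; 0], [:: 0; 2]);
              (0, [:: 0; 1; 0], [:: 1; 0; 1])]);
           ([:: 0; 1; 2; 3; 4; 5; 3; 2; 1; 0], 2, [:: (9, [:: 0; 2], [:: 2; 0]);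
              (7, [:: 2; 1; 2], [:: 1; 2; 1]); (6, [:: 3; 1], [:: 1; 3]);
              (5, [:: 5; 1], [:: 1; 5]); (4, [:: 4; 1], [:: 1; 4]);
              (3, [:: 3; 1], [:: 1; 3]); (1, [:: 1; 2; 1], [:: 2; 1; 2]);
              (0, [:: 0; 2], [:: 2; 0])]);
           ([:: 0; 1; 2; 3; 4; 5; 3; 2; 1; 0], 3, [:: (9, [:: 0; 3], [:: 3; 0]);
              (8, [:: 1; 3], [:: 3; 1]); (6, [:: 3; 2; 3], [:: 2; 3; 2]);
              (5, [:: 5; 2], [:: 2; 5]); (4, [:: 4; 2], [:: 2; 4]);
              (2, [:: 2; 3; 2], [:: 3; 2; 3]); (1, [:: 1; 3], [:: 3; 1]);
              (0, [:: 0; 3], [:: 3; 0])]);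
           ([:: 0; 1; 2; 3; 4; 5; 3; 2; 1; 0], 4, [:: (4, [:: 4; 5], [:: 5; 4]);
              (9, [:: 0; 4], [:: 4; 0]); (8, [:: 1; 4], [:: 4; 1]);
              (7, [:: 2; 4], [:: 4; 2]); (5, [:: 4; 3; 4], [:: 3; 4; 3]);
              (3, [:: 3; 5; 3], [:: 5; 3; 5]); (2, [:: 2; 5], [:: 5; 2]);
              (1, [:: 1; 5], [:: 5; 1]); (0, [:: 0; 5], [:: 5; 0]);
              (5, [:: 5; 4], [:: 4; 5])]);
           ([:: 0; 1; 2; 3; 4; 5; 3; 2; 1; 0], 5, [:: (9, [:: 0; 5], [:: 5; 0]);
              (8, [:: 1; 5], [:: 5; 1]); (7, [:: 2; 5], [:: 5; 2]);
              (5, [:: 5; 3; 5], [:: 3; 5; 3]); (3, [:: 3; 4; 3], [:: 4; 3; 4]);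
              (2, [:: 2; 4], [:: 4; 2]); (1, [:: 1; 4], [:: 4; 1]);
              (0, [:: 0; 4], [:: 4; 0])])])].

Lemma d6_certificate : coset_certificate 6 d6 d6_levels.
Proof. by vm_compute. Qed.

Lemma size_d6_words : size (chain_words d6_levels) = 23040.
Proof. by vm_compute. Qed.

Lemma d6_words_ok : all (all (gtn 6)) (chain_words d6_levels).
Proof. by vm_compute. Qed.

Section D6Presentation.
Local Open Scope group_scope.
Import Presentation.

Fixpoint formula_holds (gT : finGroupType) (e : seq gT) (f : formula) : bool :=
  match f with
  | Eq2 s t => eval e s == eval e t
  | And f1 f2 => formula_holds e f1 && formula_holds e f2
  end.

Lemma bool_of_and_rel (xT : finType) (x1 x2 : xT) r :
  bool_of_rel (and_rel x1 x2 r) = (x1 == x2) && bool_of_rel r.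
Proof. by case: r => //=; rewrite andbT. Qed.

Lemma bool_of_rel_formula (gT : finGroupType) (e : seq gT) f r :
  bool_of_rel (rel e f r) = formula_holds e f && bool_of_rel r.
Proof.
elim: f r => [s t|f1 IH1 f2 IH2] r /=; first exact: bool_of_and_rel.
by rewrite IH1 IH2 andbA.
Qed.

Lemma homGrp6P (gT : finGroupType) (G : {set gT})
    (F : term -> term -> term -> term -> term -> term -> formula) :
  reflect (exists x : gT * gT * gT * gT * gT * gT, let: (x1, x2, x3, x4, x5, x6) := x in
      (<[x1]> <*> <[x2]> <*> <[x3]> <*> <[x4]> <*> <[x5]> <*> <[x6]> == G) &&
      formula_holds [:: x1; x2; x3; x4; x5; x6]
        (F (Cst 0) (Cst 1) (Cst 2) (Cst 3) (Cst 4) (Cst 5)))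
    (hom G (fun a => Generator (fun b => Generator (fun c => Generator (fun d =>
       Generator (fun e => Generator (fun f => Formula (F a b c d e f)))))))).
Proof.
apply: (iffP existsP) => -[[[[[[x1 x2] x3] x4] x5] x6] G_x]; exists (x1, x2, x3, x4, x5, x6);
  by move: G_x; rewrite /= bool_of_and_rel bool_of_rel_formula andbT.
Qed.

Lemma join_cycles6 (gT : finGroupType) (s : nat -> gT) :
  <[s 0]> <*> <[s 1%N]> <*> <[s 2]> <*> <[s 3]> <*> <[s 4]> <*> <[s 5]> =
  <<[set s (val i) | i : 'I_6]>>.
Proof.
rewrite !gen_imset_ord_recr [<<_>>](_ : _ = 1) ?joing1G //.
by apply/trivgP; rewrite gen_subG; apply/subsetP=> x /imsetP[[]].
Qed.

Lemma d6_coxeter_presentation (gT : finGroupType) (s : nat -> gT) (W : {group gT}) :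
    coxeter_family 6 d6 s -> W :=: <<[set s (val i) | i : 'I_6]>> ->
    #|W| = size (chain_words d6_levels) ->
  is_W_D6 W.
Proof.
move=> cox_s defW card_W; apply: intro_isoGrp => [|rT H].
  apply/homGrp6P; exists (s 0, s 1%N, s 2, s 3, s 4, s 5).
  have cox_rel k i j : i < 6 -> j < 6 -> d6 i j = k -> (s i * s j) ^+ k == 1.
    by move=> lt_i6 lt_j6 <-; rewrite cox_s.
  have sq i : i < 6 -> s i ^+ 2 == 1.
    by move=> lt_i6; rewrite (coxeter_gen_sq d6_diag cox_s).
  by rewrite /= join_cycles6 -defW eqxx !sq // !cox_rel.
case/homGrp6P=> -[[[[[x1 x2] x3] x4] x5] x6] /andP[/eqP defH] /=.
do 20 case/andP=> /eqP ?; move/eqP=> ?.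
pose t i := nth 1 [:: x1; x2; x3; x4; x5; x6] i.
have cox_t : coxeter_family 6 d6 t.
  move=> i j; case: i => [|[|[|[|[|[|i]]]]]] // _; case: j => [|[|[|[|[|[|j]]]]]] // _;
  rewrite /t /d6 /=; first [by rewrite expg1 -expg2 | done | exact: involutions_order_sym].
have card_S : #|<<[set s (val i) | i : 'I_6]>>| = size (chain_words d6_levels).
  by rewrite -defW.
rewrite -defH (join_cycles6 t) defW.
exact (coxeter_universal d6_diag d6_certificate cox_s cox_t card_S).
Qed.

End D6Presentation.

Section D6PermutationGroup.
Local Open Scope group_scope.

Definition gen_perm (k : nat) : {perm 'I_92} := table_perm 92 (nth [::] gen_tables k).

Definition cox_perm (i : nat) : {perm 'I_92} :=
  word_perm 92 gen_tables (nth [::] cox_gen_words i).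

Definition W_D6 : {group {perm 'I_92}} := <<[set cox_perm (val i) | i : 'I_6]>>%G.

Lemma gen_tables_perm : all (perm_table 92) gen_tables.
Proof. by vm_compute. Qed.

Lemma size_gen_tables : size gen_tables = 6.
Proof. by rewrite size_map. Qed.

Lemma expand_word_ok w : all (gtn 6) (expand_word w).
Proof.
apply/allP=> j /flattenP[_ /mapP[k _ ->]].
have [lt_k6 | le6k] := ltnP k 6; last by rewrite nth_default.
by apply/allP; apply: (all_nthP [::] (isT : all (all (gtn 6)) cox_gen_words)).
Qed.

Lemma eval_cox_perm w : eval_word cox_perm w = word_perm 92 gen_tables (expand_word w).
Proof. by rewrite /word_perm /eval_word big_flatten big_map. Qed.

Lemma cox_word_trivial u :
    all (fun t => apply_tables gen_tables (expand_word u) t == t) (iota 0 92) ->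
  eval_word cox_perm u = 1.
Proof.
move=> /allP fix_u; rewrite eval_cox_perm; apply/permP=> t; apply: val_inj.
rewrite /= word_permE ?gen_tables_perm ?size_gen_tables ?expand_word_ok // perm1.
by apply/eqP/fix_u; rewrite mem_iota add0n ltn_ord.
Qed.

Lemma d6_relation_tables : all (fun i => all (fun j => all (fun t =>
    apply_tables gen_tables (expand_word (flatten (nseq (d6 i j) [:: i; j]))) t == t)
  (iota 0 92)) (iota 0 6)) (iota 0 6).
Proof. by vm_compute. Qed.

Lemma cox_perm_coxeter : coxeter_family 6 d6 cox_perm.
Proof.
move=> i j lt_i6 lt_j6.
have ->: cox_perm i * cox_perm j = eval_word cox_perm [:: i; j].
  by rewrite /eval_word !big_cons big_nil mulg1.
rewrite -eval_word_nseq; apply: cox_word_trivial.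
by apply: (allP (allP d6_relation_tables i _) j _); rewrite mem_iota leq0n add0n.
Qed.

Definition basis_image (w : seq nat) : seqlexi nat :=
  [seq apply_tables gen_tables (expand_word w) t | t <- iota 0 7].

Lemma sorted_basis_images :
  sorted <%O (sort <=%O [seq basis_image w | w <- chain_words d6_levels]).
Proof. by vm_compute. Qed.

Lemma uniq_cox_words W :
    sorted <%O (sort <=%O [seq basis_image w | w <- W]) ->
  uniq [seq eval_word cox_perm w | w <- W].
Proof.
rewrite lt_sorted_uniq_le sort_uniq => /andP[uniq_images _].
pose g (x : {perm 'I_92}) : seqlexi nat := [seq val (x (inord t)) | t <- iota 0 7].
apply: (@map_uniq _ _ g); rewrite -map_comp.
suff ->: [seq (g \o eval_word cox_perm) w | w <- W] = [seq basis_image w | w <- W] by [].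
apply/eq_map=> w; apply/eq_in_map=> t.
rewrite mem_iota => /andP[_ lt_t7] /=; rewrite eval_cox_perm.
rewrite word_permE ?gen_tables_perm ?size_gen_tables ?expand_word_ok ?inordK //.
exact: ltn_trans lt_t7 _.
Qed.

Lemma card_W_D6 : #|W_D6| = 23040.
Proof.
apply/eqP; rewrite eqn_leq; apply/andP; split.
  rewrite -size_d6_words.
  exact (card_coxeter_le d6_diag cox_perm_coxeter d6_certificate).
rewrite -{1}size_d6_words.
exact (card_words_le d6_words_ok (uniq_cox_words sorted_basis_images)).
Qed.

Lemma gen_cox_word_tables : all (fun k => all (fun t =>
    apply_tables gen_tables [:: k] t ==
    apply_tables gen_tables (expand_word (nth [::] mx_gen_cox_words k)) t)
  (iota 0 92)) (iota 0 6).
Proof. by vm_compute. Qed.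

Lemma gen_perm_cox_word k : k < 6 ->
  gen_perm k = eval_word cox_perm (nth [::] mx_gen_cox_words k).
Proof.
move=> lt_k6; have ->: gen_perm k = word_perm 92 gen_tables [:: k].
  by rewrite /word_perm /eval_word big_seq1.
have letters_ok w : all (gtn 6) w -> all (gtn (size gen_tables)) w.
  by rewrite size_gen_tables.
have k_ok : all (gtn 6) [:: k] by rewrite /= lt_k6.
have := allP gen_cox_word_tables k; rewrite mem_iota leq0n add0n lt_k6 => /(_ isT).
rewrite eval_cox_perm => tables_k.
exact (eq_word_perm gen_tables_perm (letters_ok _ k_ok)
                    (letters_ok _ (expand_word_ok _)) tables_k).
Qed.

Lemma gen_perm_W k : k < 6 -> gen_perm k \in W_D6.
Proof.
move=> lt_k6; rewrite gen_perm_cox_word //; apply: eval_word_mem_gen.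
exact: (all_nthP [::] (isT : all (all (gtn 6)) mx_gen_cox_words)).
Qed.

Lemma W_D6_presentation : is_W_D6 W_D6.
Proof.
apply: d6_coxeter_presentation cox_perm_coxeter _ _ => //.
by rewrite size_d6_words card_W_D6.
Qed.

End D6PermutationGroup.

Lemma tp_val a b (j : 'I_7) : 0 < a <= 7 -> 0 < b <= 7 ->
  tp a b j = tperm_index a b j :> nat.
Proof.
move=> /andP[a0 a7] /andP[b0 b7].
have ix_val k : 0 < k <= 7 -> ix k = k.-1 :> nat.
  by case/andP=> k0 k7; rewrite /ix inordK // prednK.
rewrite /tp /tperm_index -!ix_val ?a0 ?b0 //.
case: tpermP => [->|->|/eqP j_a /eqP j_b]; rewrite ?eqxx //.
  by case: eqP => // ->.
by rewrite !(inj_eq val_inj) (negbTE j_a) (negbTE j_b).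
Qed.

Section MatrixRepresentation.
Local Open Scope ring_scope.

Definition mx_of_ints (M : seq (seq int)) : 'M[algC]_7 :=
  \matrix_(i, j) (nth 0 (nth [::] M i) j)%:~R.

Definition row_of_ints (v : seq int) : 'rV[algC]_7 := \row_j (nth 0 v j)%:~R.

Lemma row_of_ints_mul v M :
  row_of_ints v *m mx_of_ints M = row_of_ints (int_vec_mul v M).
Proof.
apply/rowP=> j; rewrite !mxE /int_vec_mul nth_mkseq //.
by rewrite !big_ord_recl big_ord0 /= !mxE !intrD !intrM addr0.
Qed.

Lemma row_of_ints_inj v w : size v = 7 -> size w = 7 ->
  row_of_ints v = row_of_ints w -> v = w.
Proof.
move=> size_v size_w eq_vw; apply: (@eq_from_nth _ 0) => [|j]; first by rewrite size_v.
rewrite size_v => lt_j7; apply: (@intr_inj algC).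
by have := congr1 (fun r : 'rV_7 => r 0 (Ordinal lt_j7)) eq_vw; rewrite !mxE.
Qed.

Lemma tperm_rowsE a b : (0 < a <= 7)%N -> (0 < b <= 7)%N ->
  mx_of_ints (tperm_rows a b) = pmx (tp a b).
Proof.
move=> a_ok b_ok; apply/matrixP=> i j; rewrite !mxE !nth_mkseq //.
by rewrite -(tp_val j a_ok b_ok) (inj_eq val_inj); case: (i == _).
Qed.

Definition gen_mx (k : nat) : 'M[algC]_7 := mx_of_ints (nth [::] gen_rows k).

Lemma ML_gensP M : ML_gens M <-> exists2 k, (k < 6)%N & M = gen_mx k.
Proof.
rewrite /gen_mx; split.
  by case=> [->|[->|[->|[->|[->|->]]]]];
    [exists 0 | exists 1%N | exists 2 | exists 3 | exists 4 | exists 5];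
    rewrite //= tperm_rowsE.
case=> -[|[|[|[|[|[|k]]]]]] //= _ ->; rewrite ?tperm_rowsE //; rewrite /ML_gens;
  by do ?[by left | right].
Qed.

Definition orbit_vec (t : 'I_92) : 'rV[algC]_7 := row_of_ints (nth [::] orbit_vectors t).

Definition mx_of_perm (x : {perm 'I_92}) : 'M[algC]_7 :=
  \matrix_(i < 7) orbit_vec (x (widen_ord (isT : (7 <= 92)%N) i)).

Lemma orbit_vectors_basis : all (fun i => nth [::] orbit_vectors i ==
  mkseq (fun j => Posz (j == i)) 7) (iota 0 7).
Proof. by vm_compute. Qed.

Lemma orbit_vectors_uniq : uniq orbit_vectors && all (fun v => size v == 7) orbit_vectors.
Proof. by vm_compute. Qed.

Lemma orbit_vectors_stable :
  all (fun M => all (fun v => int_vec_mul v M \in orbit_vectors) orbit_vectors) gen_rows.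
Proof. by vm_compute. Qed.

Lemma orbit_vec_basis (i : 'I_7) :
  orbit_vec (widen_ord (isT : (7 <= 92)%N) i) = delta_mx 0 i.
Proof.
apply/rowP=> j; rewrite !mxE /= (eqP (allP orbit_vectors_basis i _)).
  by rewrite nth_mkseq // (inj_eq val_inj); case: (j == i).
by rewrite mem_iota ltn_ord.
Qed.

Lemma orbit_vec_inj : injective orbit_vec.
Proof.
case/andP: orbit_vectors_uniq => uniq_orbit /allP size7 t u.
have lt_size (v : 'I_92) : (v < size orbit_vectors)%N := ltn_ord v.
move/row_of_ints_inj; rewrite !(eqP (size7 _ (mem_nth _ (lt_size _)))) => /(_ erefl erefl).
move=> eq_tu; apply/val_inj/eqP.
by rewrite -(nth_uniq [::] (lt_size t) (lt_size u) uniq_orbit) eq_tu.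
Qed.

Definition represents (x : {perm 'I_92}) (M : 'M[algC]_7) :=
  forall t, orbit_vec t *m M = orbit_vec (x t).

Lemma represents_mx_of_perm x M : represents x M -> M = mx_of_perm x.
Proof.
move=> xM; apply/row_matrixP=> i.
by rewrite rowE -orbit_vec_basis xM rowK.
Qed.

Lemma represents1 : represents 1 1%:M.
Proof. by move=> t; rewrite mulmx1 perm1. Qed.

Lemma representsM x y M N : represents x M -> represents y N ->
  represents (x * y)%g (M *m N).
Proof. by move=> xM yN t; rewrite mulmxA xM yN permM. Qed.

Lemma represents_inj x y M : represents x M -> represents y M -> x = y.
Proof. by move=> xM yM; apply/permP=> t; apply: orbit_vec_inj; rewrite -xM -yM. Qed.

Lemma represents_gen k : (k < 6)%N -> represents (gen_perm k) (gen_mx k).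
Proof.
move=> lt_k6 t; rewrite /orbit_vec /gen_mx row_of_ints_mul; congr row_of_ints.
rewrite table_permE; last by apply: (allP gen_tables_perm); rewrite mem_nth // size_map.
rewrite /gen_tables (nth_map [::]) // (nth_map [::]) ?nth_index //.
by apply: (allP (allP orbit_vectors_stable _ (mem_nth _ _))); rewrite ?mem_nth.
Qed.

Lemma mx_of_permM x y : represents x (mx_of_perm x) -> represents y (mx_of_perm y) ->
  mx_of_perm (x * y)%g = mx_of_perm x *m mx_of_perm y.
Proof. by move=> xM yM; rewrite -(represents_mx_of_perm (representsM xM yM)). Qed.

Definition mx_rep (x : {perm 'I_92}) := represents x (mx_of_perm x) /\ ML (mx_of_perm x).

Lemma mx_rep1 : mx_rep 1%g.
Proof.
rewrite /mx_rep -(represents_mx_of_perm represents1).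
by split; [exact: represents1 | exact: gen_one].
Qed.

Lemma mx_repM x y : mx_rep x -> mx_rep y -> mx_rep (x * y)%g.
Proof.
move=> [xM MLx] [yM MLy]; rewrite /mx_rep (mx_of_permM xM yM).
by split; [exact: representsM | exact: gen_mul].
Qed.

Lemma mx_rep_gen k : (k < 6)%N -> mx_rep (gen_perm k).
Proof.
move=> lt_k6; have genM := represents_gen lt_k6.
rewrite /mx_rep -(represents_mx_of_perm genM); split=> //.
by apply: gen_base; apply/ML_gensP; exists k.
Qed.

Lemma mx_rep_word w : all (gtn 6) w -> mx_rep (word_perm 92 gen_tables w).
Proof.
elim: w => [_|k w IHw /andP[lt_k6 w_ok]]; rewrite /word_perm /eval_word.
  by rewrite big_nil; exact mx_rep1.
by rewrite big_cons; exact (mx_repM (mx_rep_gen lt_k6) (IHw w_ok)).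
Qed.

Lemma mx_rep_W x : x \in W_D6 -> mx_rep x.
Proof.
case/gen_prodgP=> k [c W_c ->]; apply: (big_ind mx_rep mx_rep1 mx_repM) => i _.
have /imsetP[j _ ->] := W_c i; apply: mx_rep_word.
by rewrite -[nth _ _ _]cats0; exact: (expand_word_ok [:: val j]).
Qed.

Lemma ML_mx_of_perm M : ML M <-> exists2 x, x \in W_D6 & mx_of_perm x = M.
Proof.
split; last by case=> x /mx_rep_W[_ MLx] <-.
elim=> {M} [|M /ML_gensP[k lt_k6 ->]|M N _ [x Wx <-] _ [y Wy <-]|M _ [x Wx <-] unitM].
- by exists 1%g; rewrite ?group1 // -(represents_mx_of_perm represents1).
- exists (gen_perm k); first exact: gen_perm_W.
  by rewrite -(represents_mx_of_perm (represents_gen lt_k6)).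
- exists (x * y)%g; first by rewrite groupM.
  by rewrite mx_of_permM //; [case: (mx_rep_W Wx) | case: (mx_rep_W Wy)].
- exists x^-1%g; first by rewrite groupV.
  have [xM _] := mx_rep_W Wx; have [xVM _] := mx_rep_W (groupVr Wx).
  have := mx_of_permM xM xVM; rewrite mulgV -(represents_mx_of_perm represents1) => id_x.
  by rewrite -[invmx _]mulmx1 id_x mulmxA mulVmx // mul1mx.
Qed.

End MatrixRepresentation.

Local Open Scope ring_scope.

Theorem theorem6p1 :
  exists (gT : finGroupType) (W : {group gT}) (f : gT -> 'M[algC]_7),
    [/\ is_W_D6 W,
        #|W| = 23040%N,
        {in W &, forall x y, f (x * y)%g = f x *m f y},
        {in W &, injective f}
      & forall M, ML M <-> exists2 w, w \in W & f w = M].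
Proof.
exists _, W_D6, mx_of_perm; split.
- exact: W_D6_presentation.
- exact: card_W_D6.
- by move=> x y /mx_rep_W[xM _] /mx_rep_W[yM _]; exact: mx_of_permM.
- move=> x y /mx_rep_W[xM _] /mx_rep_W[yM _] eq_xy.
  by apply: represents_inj xM _; rewrite eq_xy.
- exact: ML_mx_of_perm.
Qed.
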